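(* The cartesian product induces an injective ring homomorphism $$\mathrm{B}(\mathbb{Z})\otimes\mathrm{B}(\mathcal{Q})\longrightarrow\mathrm{B}(\mathcal{R}),\qquad [(X,\pi)]\otimes b(Q)\longmapsto b((X,\pi)\times Q),$$ where $(X,\pi)$ is regarded as a permutation rack.
   Context: A rack is a set $R$ with a binary operation $\rhd$ such that every left multiplication $\ell_a\colon b\mapsto a\rhd b$ is a bijection and $a\rhd(b\rhd c)=(a\rhd b)\rhd(a\rhd c)$ for all $a,b,c$; a quandle is a rack with $a\rhd a=a$ for all $a$. A permutation rack $(X,\pi)$ is a set $X$ with permutation $\pi$ and $a\rhd b=\pi(b)$. Products of racks are cartesian products with componentwise operation. A subrack is a subset $S$ with $\ell_s(S)=S$ for all $s\in S$; a decomposition of $R$ into $S$ and $T$ means $S,T$ are disjoint subracks (possibly empty) with $S\cup T=R$. The Burnside ring of finite racks $\mathrm{B}(\mathcal{R})$ is the abelian group generated by symbols $b(R)$, one for each finite rack $R$, subject to $b(R_1)=b(R_2)$ whenever $R_1\cong R_2$ and $b(R)=b(S)+b(T)$ whenever $R$ decomposes into $S$ and $T$, with ring structure $b(R)b(R')=b(R\times R')$; the Burnside ring of finite quandles $\mathrm{B}(\mathcal{Q})$ is defined in the same way using finite quandles. $\mathrm{B}(\mathbb{Z})$ is the Grothendieck ring of isomorphism classes of pairs $(X,\pi)$, $X$ a finite set and $\pi$ a permutation of $X$, with addition from disjoint union and multiplication from cartesian product. *)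

From mathcomp Require Import all_boot all_algebra all_fingroup.
Set Implicit Arguments. Unset Strict Implicit. Unset Printing Implicit Defensive.
Import GRing.Theory.
Local Open Scope ring_scope.

(* Generic Grothendieck-group machinery: formal Z-combinations of      *)
(* generators (lists of (coefficient, generator)) modulo the subgroup  *)
(* generated by a family of relation combinations.                     *)

Definition coef (G : eqType) (s : seq (int * G)) (g : G) : int :=
  \sum_(p <- s | p.2 == g) p.1.

Inductive zspan (G : eqType) (Rel : seq (int * G) -> Prop) : (G -> int) -> Prop :=
| zspan0 : zspan Rel (fun _ => 0)
| zspan_rel s : Rel s -> zspan Rel (coef s)
| zspan_add f g : zspan Rel f -> zspan Rel g -> zspan Rel (fun x => f x + g x)
| zspan_opp f : zspan Rel f -> zspan Rel (fun x => - f x)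
| zspan_ext f g : zspan Rel f -> (forall x, f x = g x) -> zspan Rel g.

Definition eqB (G : eqType) (Rel : seq (int * G) -> Prop) (s t : seq (int * G)) : Prop :=
  zspan Rel (fun g => coef s g - coef t g).

Definition fmul (G : Type) (mul : G -> G -> G) (s t : seq (int * G)) : seq (int * G) :=
  [seq (p.1 * q.1, mul p.2 q.2) | p <- s, q <- t].

(* Finite magmas (carrier 'I_n); racks and quandles.                   *)
(* Every finite rack is isomorphic to one of these.                    *)

Definition magma := {n : nat & {ffun 'I_n -> {ffun 'I_n -> 'I_n}}}.

Definition mop (M : magma) (a b : 'I_(tag M)) : 'I_(tag M) := tagged M a b.
Arguments mop : clear implicits.

Definition is_rack (M : magma) : Prop :=
  (forall a, bijective (mop M a)) /\
  (forall a b c, mop M a (mop M b c) = mop M (mop M a b) (mop M a c)).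

Definition is_quandle (M : magma) : Prop :=
  is_rack M /\ (forall a, mop M a a = a).

Definition miso (M N : magma) : Prop :=
  exists f : 'I_(tag M) -> 'I_(tag N),
    bijective f /\ forall a b, f (mop M a b) = mop N (f a) (f b).

Definition subrack (M : magma) (S : {set 'I_(tag M)}) : Prop :=
  forall s, s \in S -> [set mop M s x | x in S] = S.

Definition membeds_onto (N M : magma) (S : {set 'I_(tag M)}) : Prop :=
  exists f : 'I_(tag N) -> 'I_(tag M),
    injective f /\ [set f x | x in 'I_(tag N)] = S /\
    forall a b, f (mop N a b) = mop M (f a) (f b).

Definition mdecomp (M N1 N2 : magma) : Prop :=
  exists S T : {set 'I_(tag M)},
    [/\ subrack S, subrack T, [disjoint S & T], S :|: T = setT &
        membeds_onto N1 S /\ membeds_onto N2 T].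

(* defining relations of B(R) (resp. B(Q) when restricted to quandles) *)
Definition RelB (P : magma -> Prop) (s : seq (int * magma)) : Prop :=
  (exists R1 R2, [/\ P R1, P R2, miso R1 R2 & s = [:: (1, R1); (-1, R2)]]) \/
  (exists R S T, [/\ P R, mdecomp R S T & s = [:: (1, R); (-1, S); (-1, T)]]).

Definition RackRel := RelB is_rack.
Definition QuandleRel := RelB is_quandle.

Lemma card_ord_prod m n : #|{: 'I_m * 'I_n}| = (m * n)%N.
Proof. by rewrite card_prod !card_ord. Qed.

Definition pidx m n (p : 'I_m * 'I_n) : 'I_(m * n) :=
  cast_ord (card_ord_prod m n) (enum_rank p).
Definition punidx m n (i : 'I_(m * n)) : 'I_m * 'I_n :=
  enum_val (cast_ord (esym (card_ord_prod m n)) i).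

Definition mprod (M N : magma) : magma :=
  existT _ (tag M * tag N)%N
    [ffun i => [ffun j =>
       pidx (mop M (punidx i).1 (punidx j).1, mop N (punidx i).2 (punidx j).2)]].

Definition mpoint : magma := existT _ 1%N [ffun _ => [ffun _ => ord0]].

(* Finite sets with a permutation: B(Z).                               *)

Definition permset := {n : nat & {perm 'I_n}}.

Definition piso (X Y : permset) : Prop :=
  exists f : 'I_(tag X) -> 'I_(tag Y),
    bijective f /\ forall a, f (tagged X a) = tagged Y (f a).

Definition pembeds_onto (Y X : permset) (S : {set 'I_(tag X)}) : Prop :=
  exists f : 'I_(tag Y) -> 'I_(tag X),
    injective f /\ [set f x | x in 'I_(tag Y)] = S /\
    forall a, f (tagged Y a) = tagged X (f a).

Definition pdecomp (X Y Z : permset) : Prop :=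
  exists S T : {set 'I_(tag X)},
    [/\ [set tagged X x | x in S] = S, [set tagged X x | x in T] = T,
        [disjoint S & T] & S :|: T = setT /\
        pembeds_onto Y S /\ pembeds_onto Z T].

Definition PermRel (s : seq (int * permset)) : Prop :=
  (exists X Y, piso X Y /\ s = [:: (1, X); (-1, Y)]) \/
  (exists X Y Z, pdecomp X Y Z /\ s = [:: (1, X); (-1, Y); (-1, Z)]).

Lemma pprod_inj m n (p : {perm 'I_m}) (q : {perm 'I_n}) :
  injective (fun i : 'I_(m * n) => pidx (p (punidx i).1, q (punidx i).2)).
Proof.
move=> i j /= /(congr1 val) /=; move/val_inj/enum_rank_inj => [] /perm_inj e1 /perm_inj e2.
have : punidx i = punidx j by rewrite [punidx i]surjective_pairing e1 e2 -surjective_pairing.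
rewrite /punidx => /enum_val_inj /(congr1 val) /= /val_inj; done.
Qed.

Definition pprod (X Y : permset) : permset :=
  existT _ (tag X * tag Y)%N (perm (@pprod_inj _ _ (tagged X) (tagged Y))).

Definition ppoint : permset := existT _ 1%N (1%g : {perm 'I_1}).

Definition permrack (X : permset) : magma :=
  existT _ (tag X) [ffun _ => [ffun b => tagged X b]].

(* B(Z) (x) B(Q) as the free abelian group on pairs of generators      *)
(* modulo (relations of B(Z)) (x) generators + generators (x) (rel. of *)
(* B(Q)); its ring product is (X (x) Q)(X' (x) Q') = (XxX') (x) (QxQ').*)

Definition TensorRel (s : seq (int * (permset * magma))) : Prop :=
  (exists r Q, PermRel r /\ is_quandle Q /\ s = [seq (p.1, (p.2, Q)) | p <- r]) \/
  (exists X r, QuandleRel r /\ s = [seq (p.1, (X, p.2)) | p <- r]).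

Definition tprod (u v : permset * magma) : permset * magma :=
  (pprod u.1 v.1, mprod u.2 v.2).

Definition phi (s : seq (int * (permset * magma))) : seq (int * magma) :=
  [seq (p.1, mprod (permrack p.2.1) p.2.2) | p <- s].

Definition tensor_gens (s : seq (int * (permset * magma))) : Prop :=
  forall p, p \in s -> is_quandle p.2.2.

(* The cartesian product carries isomorphisms and decompositions of permutation
   sets and of quandles to isomorphisms and decompositions of racks, so it
   induces a well-defined map; it is multiplicative because
   (X x X') x (Q x Q') is isomorphic to (X x Q) x (X' x Q').

   For injectivity, every rack R carries the automorphism theta(a) = a |> a,
   which satisfies theta(a) |> b = a |> b and a |> theta(b) = theta(a |> b).
   Hence for each n the theta-orbits of length n form a quandle lambda_n(R)
   under [a] |> [b] = [a |> b], and lambda_n preserves isomorphisms and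
   decompositions, giving lambda_n : B(R) -> B(Q).  In B(Z) every (X, pi) is a
   sum of cycles C_m, so an element of B(Z) (x) B(Q) is a sum of [C_m] (x) x_m.
   On C_m x Q the automorphism theta is (successor, identity), so
   lambda_n(C_m x Q) is Q for m = n and empty otherwise: lambda_n recovers x_n
   from the image, which therefore vanishes only if every x_n does. *)

From mathcomp Require Import all_boot all_algebra all_fingroup.
From mathcomp.algebra_tactics Require Import ring.
Set Implicit Arguments. Unset Strict Implicit. Unset Printing Implicit Defensive.
Import GRing.Theory.
Local Open Scope ring_scope.

(** * Formal combinations *)

Section Combinations.
Variable G : eqType.
Implicit Types (s t : seq (int * G)) (g : G).

Definition scale_comb (c : int) s : seq (int * G) := [seq (c * p.1, p.2) | p <- s].

Lemma coef_nil g : coef [::] g = 0 :> int.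
Proof. by rewrite /coef big_nil. Qed.

Lemma coef_cons (p : int * G) s g :
  coef (p :: s) g = (if p.2 == g then p.1 else 0) + coef s g.
Proof. by rewrite /coef big_cons; case: ifP; rewrite ?add0r. Qed.

Lemma coef_cat s t g : coef (s ++ t) g = coef s g + coef t g.
Proof. by rewrite /coef big_cat. Qed.

Lemma coef_scale c s g : coef (scale_comb c s) g = c * coef s g.
Proof.
elim: s => [|p s IH]; first by rewrite !coef_nil mulr0.
by rewrite /= !coef_cons IH mulrDr; case: ifP; rewrite ?mulr0.
Qed.

Lemma big_comb_coef s (F : G -> int) :
  \sum_(p <- s) p.1 * F p.2 = \sum_(g <- undup [seq p.2 | p <- s]) coef s g * F g.
Proof.
transitivity (\sum_(g <- undup [seq p.2 | p <- s]) \sum_(p <- s | p.2 == g) p.1 * F p.2);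
  last by apply: eq_bigr => g _; rewrite /coef mulr_suml; apply: eq_bigr => p /eqP ->.
rewrite (exchange_big_dep xpredT) //=; apply: eq_big_seq => p s_p.
have p_supp : p.2 \in undup [seq p.2 | p <- s] by rewrite mem_undup map_f.
rewrite (eq_bigl (pred1 p.2)) => [|g]; last by rewrite eq_sym.
rewrite (big_rem _ p_supp) /= eqxx big1_seq ?addr0 // => g /andP [/eqP -> ].
by rewrite mem_rem_uniq ?undup_uniq // inE eqxx.
Qed.

Lemma big_comb_coef0 s (F : G -> int) :
  coef s =1 (fun=> 0) -> \sum_(p <- s) p.1 * F p.2 = 0.
Proof. by move=> s0; rewrite big_comb_coef big1 // => g _; rewrite s0 mul0r. Qed.

End Combinations.

Section LinearExtension.
Variables (G H : eqType) (F : G -> seq (int * H)).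
Implicit Types (s t : seq (int * G)).

Definition linear_ext s : seq (int * H) := flatten [seq scale_comb p.1 (F p.2) | p <- s].

Lemma linear_ext_cat s t : linear_ext (s ++ t) = linear_ext s ++ linear_ext t.
Proof. by rewrite /linear_ext map_cat flatten_cat. Qed.

Lemma coef_linear_ext s h : coef (linear_ext s) h = \sum_(p <- s) p.1 * coef (F p.2) h.
Proof.
elim: s => [|p s IH]; first by rewrite coef_nil big_nil.
by rewrite /linear_ext /= coef_cat coef_scale -/(linear_ext s) IH big_cons.
Qed.

Lemma coef_linear_ext_scale c s h :
  coef (linear_ext (scale_comb c s)) h = c * coef (linear_ext s) h.
Proof.
rewrite !coef_linear_ext big_map mulr_sumr.
by apply: eq_bigr => p _; rewrite mulrA.
Qed.

Lemma linear_ext_coef s t : coef s =1 coef t -> coef (linear_ext s) =1 coef (linear_ext t).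
Proof.
move=> st h; rewrite !coef_linear_ext; apply/eqP; rewrite -subr_eq0.
have st0 : coef (s ++ scale_comb (-1) t) =1 (fun=> 0).
  by move=> g; rewrite coef_cat coef_scale st mulN1r subrr.
have := big_comb_coef0 (fun g => coef (F g) h) st0.
rewrite big_cat big_map /=; under [X in _ + X]eq_bigr do rewrite mulN1r mulNr.
by rewrite sumrN => ->.
Qed.

End LinearExtension.

Lemma linear_ext_map (G H : eqType) (f : G -> H) (s : seq (int * G)) :
  linear_ext (fun g => [:: (1, f g)]) s = [seq (p.1, f p.2) | p <- s].
Proof. by elim: s => //= p s <-; rewrite /linear_ext /= mulr1. Qed.

Section Quotient.
Variables (G : eqType) (Rel : seq (int * G) -> Prop).
Implicit Types (s t : seq (int * G)).

Lemma zspan_scale (c : int) f : zspan Rel f -> zspan Rel (fun x => c * f x).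
Proof.
have zspan_nat (n : nat) f' : zspan Rel f' -> zspan Rel (fun x => n%:Z * f' x).
  move=> Hf; elim: n => [|n IH]; first by apply: zspan_ext (zspan0 Rel) _ => x; rewrite mul0r.
  by apply: zspan_ext (zspan_add Hf IH) _ => x; rewrite intS mulrDl mul1r.
move=> Hf; case: c => n; first exact: zspan_nat.
by apply: zspan_ext (zspan_opp (zspan_nat n.+1 _ Hf)) _ => x; rewrite NegzE mulNr.
Qed.

Lemma eqB_coef s s' t t' :
  coef s =1 coef s' -> coef t =1 coef t' -> eqB Rel s t -> eqB Rel s' t'.
Proof. by move=> Es Et H; apply: zspan_ext H _ => x; rewrite Es Et. Qed.

Lemma eqB_refl s : eqB Rel s s.
Proof. by apply: zspan_ext (zspan0 Rel) _ => x; rewrite subrr. Qed.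

Lemma eqB_sym s t : eqB Rel s t -> eqB Rel t s.
Proof. by move=> H; apply: zspan_ext (zspan_opp H) _ => x; rewrite opprB. Qed.

Lemma eqB_trans s t u : eqB Rel s t -> eqB Rel t u -> eqB Rel s u.
Proof. by move=> H1 H2; apply: zspan_ext (zspan_add H1 H2) _ => x; rewrite addrA subrK. Qed.

Lemma eqB_cat s t s' t' : eqB Rel s t -> eqB Rel s' t' -> eqB Rel (s ++ s') (t ++ t').
Proof. by move=> H1 H2; apply: zspan_ext (zspan_add H1 H2) _ => x; rewrite !coef_cat; ring. Qed.

Lemma eqB_scale c s t : eqB Rel s t -> eqB Rel (scale_comb c s) (scale_comb c t).
Proof. by move=> H; apply: zspan_ext (zspan_scale c H) _ => x; rewrite !coef_scale mulrBr. Qed.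

Lemma eqB_relation r s t : Rel r -> coef r =1 (fun g => coef s g - coef t g) -> eqB Rel s t.
Proof. by move=> Hr Er; apply: zspan_ext (zspan_rel Hr) _. Qed.

Lemma eqB_rel r : Rel r -> eqB Rel r [::].
Proof. by move=> Hr; apply: eqB_relation Hr _ => x; rewrite coef_nil subr0. Qed.

Lemma eqB_pair_rel c a b : Rel [:: (1, a); (-1, b)] -> eqB Rel [:: (c, a)] [:: (c, b)].
Proof.
move=> Hr; have E1 : eqB Rel [:: (1, a)] [:: (1, b)].
  by apply: eqB_relation Hr _ => x; rewrite !coef_cons !coef_nil /=; case: (a == x); case: (b == x).
by have := eqB_scale c E1; rewrite /scale_comb /= mulr1.
Qed.

Lemma eqB_split_rel a b c :
  Rel [:: (1, a); (-1, b); (-1, c)] -> eqB Rel [:: (1, a)] [:: (1, b); (1, c)].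
Proof.
move=> Hr; apply: eqB_relation Hr _ => x; rewrite !coef_cons !coef_nil /=.
by case: (a == x); case: (b == x); case: (c == x); ring.
Qed.

Lemma eqB_null_rel a : Rel [:: (1, a); (-1, a); (-1, a)] -> eqB Rel [:: (1, a)] [::].
Proof.
move=> Hr; apply: zspan_ext (zspan_opp (zspan_rel Hr)) _ => x.
by rewrite !coef_cons !coef_nil /=; case: (a == x); ring.
Qed.

End Quotient.

Lemma eqB_linear_ext (G H : eqType) (RelG : seq (int * G) -> Prop)
    (RelH : seq (int * H) -> Prop) (F : G -> seq (int * H)) :
  (forall r, RelG r -> eqB RelH (linear_ext F r) [::]) ->
  forall s t, eqB RelG s t -> eqB RelH (linear_ext F s) (linear_ext F t).
Proof.
move=> FRel s t.
have lift f : zspan RelG f -> exists2 u, coef u =1 f & eqB RelH (linear_ext F u) [::].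
  elim=> {f} [|r Hr|f f' _ [u Eu Hu] _ [u' Eu' Hu']|f _ [u Eu Hu]|f f' _ [u Eu Hu] Ef].
  - by exists [::]; [exact: coef_nil | exact: eqB_refl].
  - by exists r => //; apply: FRel.
  - exists (u ++ u'); first by move=> x; rewrite coef_cat Eu Eu'.
    by rewrite linear_ext_cat; exact: eqB_cat Hu Hu'.
  - exists (scale_comb (-1) u); first by move=> x; rewrite coef_scale Eu mulN1r.
    by apply: eqB_coef (eqB_scale (-1) Hu) => // x; rewrite coef_scale coef_linear_ext_scale.
  - by exists u => // x; rewrite Eu.
case/lift=> u Eu Hu.
have Ediff : coef u =1 coef (s ++ scale_comb (-1) t).
  by move=> x; rewrite Eu coef_cat coef_scale mulN1r.
apply: zspan_ext Hu _ => x.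
by rewrite coef_nil subr0 (linear_ext_coef F Ediff) linear_ext_cat coef_cat
  coef_linear_ext_scale mulN1r.
Qed.

Lemma eqB_allpairs (S T H : eqType) (Rel : seq (int * H) -> Prop)
    (F1 F2 : S -> T -> int * H) (s : seq S) (t : seq T) :
  (forall p q, p \in s -> q \in t -> eqB Rel [:: F1 p q] [:: F2 p q]) ->
  eqB Rel [seq F1 p q | p <- s, q <- t] [seq F2 p q | p <- s, q <- t].
Proof.
elim: s => [|p s IHs] Fst; first exact: eqB_refl.
rewrite !allpairs_cons; apply: eqB_cat.
  elim: t Fst {IHs} => [|q t IHt] Fst; first exact: eqB_refl.
  apply: (@eqB_cat _ _ [:: _] [:: _]); first by apply: Fst; rewrite mem_head.
  by apply: IHt => p' q' s_p' t_q'; apply: Fst; rewrite // inE t_q' orbT.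
by apply: IHs => p' q s_p'; apply: Fst; rewrite inE s_p' orbT.
Qed.

(** * Racks on ordinals *)

Lemma pidxK m n : cancel (@pidx m n) (@punidx m n).
Proof. by move=> p; rewrite /pidx /punidx cast_ordK enum_rankK. Qed.

Lemma punidxK m n : cancel (@punidx m n) (@pidx m n).
Proof. by move=> i; rewrite /pidx /punidx enum_valK cast_ordKV. Qed.

Lemma pidx_inj m n : injective (@pidx m n).
Proof. exact: can_inj (@pidxK m n). Qed.

Definition pidx_map m m' n n' (f : 'I_m -> 'I_m') (g : 'I_n -> 'I_n') (i : 'I_(m * n)) :
  'I_(m' * n') := pidx (f (punidx i).1, g (punidx i).2).

Lemma pidx_mapE m m' n n' (f : 'I_m -> 'I_m') (g : 'I_n -> 'I_n') a b :
  pidx_map f g (pidx (a, b)) = pidx (f a, g b).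
Proof. by rewrite /pidx_map pidxK. Qed.

Lemma pidx_map_inj m m' n n' (f : 'I_m -> 'I_m') (g : 'I_n -> 'I_n') :
  injective f -> injective g -> injective (pidx_map f g).
Proof.
move=> f_inj g_inj i j; rewrite -(punidxK i) -(punidxK j).
by case: (punidx i) (punidx j) => a b [c d]; rewrite !pidx_mapE => /pidx_inj [/f_inj -> /g_inj ->].
Qed.

Lemma pidx_map_can m m' n n' (f : 'I_m -> 'I_m') (f' : 'I_m' -> 'I_m)
    (g : 'I_n -> 'I_n') (g' : 'I_n' -> 'I_n) :
  cancel f f' -> cancel g g' -> cancel (pidx_map f g) (pidx_map f' g').
Proof. by move=> fK gK i; rewrite /pidx_map pidxK /= fK gK -surjective_pairing punidxK. Qed.

Lemma mop_mprod (M N : magma) i j : mop (mprod M N) i j =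
  pidx (mop M (punidx i).1 (punidx j).1, mop N (punidx i).2 (punidx j).2).
Proof. by rewrite /mop /= !ffunE. Qed.

Lemma mop_mprod_pidx (M N : magma) a b c d :
  mop (mprod M N) (pidx (a, b)) (pidx (c, d)) = pidx (mop M a c, mop N b d).
Proof. by rewrite mop_mprod !pidxK. Qed.

Lemma mop_permrack (X : permset) a b : mop (permrack X) a b = tagged X b.
Proof. by rewrite /mop /= !ffunE. Qed.

Lemma pprod_pidx (X Y : permset) a b :
  tagged (pprod X Y) (pidx (a, b)) = pidx (tagged X a, tagged Y b).
Proof. by rewrite /pprod /= permE /= pidxK. Qed.

Definition mhom (N M : magma) (f : 'I_(tag N) -> 'I_(tag M)) :=
  forall a b, f (mop N a b) = mop M (f a) (f b).

Lemma mhom_pidx_map (M M' N N' : magma) (f : 'I_(tag M) -> 'I_(tag M'))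
    (g : 'I_(tag N) -> 'I_(tag N')) :
  mhom f -> mhom g -> @mhom (mprod M N) (mprod M' N') (pidx_map f g).
Proof.
move=> fh gh i j; rewrite -(punidxK i) -(punidxK j).
by case: (punidx i) (punidx j) => a b [c d]; rewrite !(mop_mprod_pidx, pidx_mapE) fh gh.
Qed.

Lemma rackP (M : magma) :
  is_rack M <-> (forall a, injective (mop M a)) /\
               (forall a b c, mop M a (mop M b c) = mop M (mop M a b) (mop M a c)).
Proof. by split=> [[Hb Hd]|[Hi Hd]]; split=> // a; [exact: bij_inj | exact: injF_bij]. Qed.

Section RackLaws.
Variables (M : magma) (HM : is_rack M).

Lemma rack_inj a b c : mop M a b = mop M a c -> b = c.
Proof. by case/rackP: HM => M_inj _; apply: M_inj. Qed.

Lemma rack_distr a b c : mop M a (mop M b c) = mop M (mop M a b) (mop M a c).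
Proof. by case/rackP: HM. Qed.

End RackLaws.

Lemma quandle_rack M : is_quandle M -> is_rack M.
Proof. by case. Qed.

Lemma rack_mprod M N : is_rack M -> is_rack N -> is_rack (mprod M N).
Proof.
move=> HM HN; apply/rackP; split=> [i j k|i j k].
  rewrite !mop_mprod => /pidx_inj [E1 E2]; apply: (can_inj (@punidxK _ _)).
  exact: injective_projections (rack_inj HM E1) (rack_inj HN E2).
rewrite -(punidxK i) -(punidxK j) -(punidxK k).
case: (punidx i) (punidx j) (punidx k) => a1 a2 [b1 b2] [c1 c2].
by rewrite !mop_mprod_pidx (rack_distr HM) (rack_distr HN).
Qed.

Lemma rack_permrack X : is_rack (permrack X).
Proof. by apply/rackP; split=> a b c; rewrite !mop_permrack //; exact: perm_inj. Qed.

Lemma rack_permrack_mprod X Q : is_quandle Q -> is_rack (mprod (permrack X) Q).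
Proof. by move/quandle_rack; apply: rack_mprod (rack_permrack X). Qed.

Lemma mhom_inj_rack N M (f : 'I_(tag N) -> 'I_(tag M)) :
  injective f -> mhom f -> is_rack M -> is_rack N.
Proof.
move=> f_inj fh HM; apply/rackP; split=> [a b c|a b c].
  by move/(congr1 f); rewrite !fh => /(rack_inj HM) /f_inj.
by apply: f_inj; rewrite !fh (rack_distr HM).
Qed.

Lemma miso_refl M : miso M M.
Proof. by exists id; split=> //; exists id. Qed.

Lemma miso_mprod M M' N N' : miso M M' -> miso N N' -> miso (mprod M N) (mprod M' N').
Proof.
move=> [f [[f' fK f'K] fh]] [g [[g' gK g'K] gh]].
exists (pidx_map f g); split; last exact: mhom_pidx_map.
by exists (pidx_map f' g'); apply: pidx_map_can.
Qed.

Lemma miso_permrack X Y : piso X Y -> miso (permrack X) (permrack Y).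
Proof. by move=> [f [f_bij fh]]; exists f; split=> // a b; rewrite !mop_permrack. Qed.

Definition img_partition (A B C : Type) (f1 : B -> A) (f2 : C -> A) :=
  (forall x, (exists a, x = f1 a) \/ (exists b, x = f2 b)) /\ (forall a b, f1 a <> f2 b).

Lemma img_partition_sets (A B C : finType) (f1 : B -> A) (f2 : C -> A) (S T : {set A}) :
  [disjoint S & T] -> S :|: T = setT -> [set f1 x | x in B] = S -> [set f2 x | x in C] = T ->
  img_partition f1 f2.
Proof.
move=> dST cST im1 im2; split=> [x|a b E].
  have : x \in S :|: T by rewrite cST inE.
  by rewrite inE -im1 -im2 => /orP [/imsetP [a _ ->]|/imsetP [b _ ->]];
    [left; exists a | right; exists b].
have : f1 a \in S :&: T by rewrite inE -im1 imset_f // E -im2 imset_f.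
by rewrite -setI_eq0 in dST; rewrite (eqP dST) inE.
Qed.

Definition msplit (M N1 N2 : magma) (f1 : 'I_(tag N1) -> 'I_(tag M))
    (f2 : 'I_(tag N2) -> 'I_(tag M)) :=
  [/\ injective f1, injective f2, mhom f1, mhom f2 & img_partition f1 f2].

Lemma subrack_image N M (f : 'I_(tag N) -> 'I_(tag M)) :
  is_rack M -> mhom f -> subrack [set f x | x in 'I_(tag N)].
Proof.
move=> HM fh _ /imsetP [a _ ->]; apply/eqP.
have fa_inj : injective (mop M (f a)) by move=> x y /(rack_inj HM).
rewrite eqEcard (card_imset _ fa_inj) leqnn andbT.
apply/subsetP => _ /imsetP [_ /imsetP [b _ ->] ->].
by rewrite -fh imset_f.
Qed.

Lemma mdecompP M N1 N2 : is_rack M ->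
  mdecomp M N1 N2 <-> exists f1 f2, @msplit M N1 N2 f1 f2.
Proof.
move=> HM; split.
  move=> [S [T [_ _ dST cST [[f1 [f1_inj [im1 h1]]] [f2 [f2_inj [im2 h2]]]]]]].
  by exists f1, f2; split=> //; exact: img_partition_sets dST cST im1 im2.
move=> [f1 [f2 [f1_inj f2_inj h1 h2 [cov dis]]]].
exists [set f1 x | x in 'I_(tag N1)], [set f2 x | x in 'I_(tag N2)]; split.
- exact: subrack_image.
- exact: subrack_image.
- by apply/pred0P => x /=; apply/negP => /andP [/imsetP [a _ ->] /imsetP [b _ /dis]].
- by apply/setP => x; rewrite !inE; case: (cov x) => [[a ->]|[b ->]]; rewrite imset_f ?orbT.
- by split; [exists f1 | exists f2].
Qed.

Lemma img_partition_pidx_mapl m m1 m2 n (f1 : 'I_m1 -> 'I_m) (f2 : 'I_m2 -> 'I_m) :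
  img_partition f1 f2 -> img_partition (pidx_map f1 (@id 'I_n)) (pidx_map f2 id).
Proof.
move=> [cov dis]; split=> [x|a b]; last first.
  by rewrite /pidx_map => /pidx_inj [/dis].
rewrite -(punidxK x); case: (punidx x) => y z.
by case: (cov y) => [[a ->]|[b ->]]; [left; exists (pidx (a, z)) | right; exists (pidx (b, z))];
  rewrite pidx_mapE.
Qed.

Lemma img_partition_pidx_mapr m m1 m2 n (f1 : 'I_m1 -> 'I_m) (f2 : 'I_m2 -> 'I_m) :
  img_partition f1 f2 -> img_partition (pidx_map (@id 'I_n) f1) (pidx_map id f2).
Proof.
move=> [cov dis]; split=> [x|a b]; last first.
  by rewrite /pidx_map => /pidx_inj [_ /dis].
rewrite -(punidxK x); case: (punidx x) => z y.
by case: (cov y) => [[a ->]|[b ->]]; [left; exists (pidx (z, a)) | right; exists (pidx (z, b))];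
  rewrite pidx_mapE.
Qed.

Lemma mdecomp_mprodl M S T N : is_rack M -> is_rack N -> mdecomp M S T ->
  mdecomp (mprod M N) (mprod S N) (mprod T N).
Proof.
move=> HM HN /(mdecompP _ _ HM) [f1 [f2 [f1_inj f2_inj h1 h2 part]]].
apply/mdecompP; first exact: rack_mprod.
exists (pidx_map f1 id), (pidx_map f2 id); split.
- exact: pidx_map_inj.
- exact: pidx_map_inj.
- exact: mhom_pidx_map.
- exact: mhom_pidx_map.
- exact: img_partition_pidx_mapl.
Qed.

Lemma mdecomp_mprodr M S T N : is_rack M -> is_rack N -> mdecomp M S T ->
  mdecomp (mprod N M) (mprod N S) (mprod N T).
Proof.
move=> HM HN /(mdecompP _ _ HM) [f1 [f2 [f1_inj f2_inj h1 h2 part]]].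
apply/mdecompP; first exact: rack_mprod.
exists (pidx_map id f1), (pidx_map id f2); split.
- exact: pidx_map_inj.
- exact: pidx_map_inj.
- exact: mhom_pidx_map.
- exact: mhom_pidx_map.
- exact: img_partition_pidx_mapr.
Qed.

Lemma mdecomp_permrack X Y Z : pdecomp X Y Z ->
  mdecomp (permrack X) (permrack Y) (permrack Z).
Proof.
move=> [S [T [_ _ dST [cST [[f1 [f1_inj [im1 h1]]] [f2 [f2_inj [im2 h2]]]]]]]].
apply/mdecompP; first exact: rack_permrack.
exists f1, f2; split=> //; last exact: img_partition_sets dST cST im1 im2.
- by move=> a b; rewrite !mop_permrack h1.
- by move=> a b; rewrite !mop_permrack h2.
Qed.

Lemma RelB_iso (P : magma -> Prop) R1 R2 :
  P R1 -> P R2 -> miso R1 R2 -> RelB P [:: (1, R1); (-1, R2)].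
Proof. by move=> *; left; exists R1, R2. Qed.

Lemma RelB_decomp (P : magma -> Prop) R S T :
  P R -> mdecomp R S T -> RelB P [:: (1, R); (-1, S); (-1, T)].
Proof. by move=> *; right; exists R, S, T. Qed.

(** * The product map *)

Lemma phiE s : phi s = linear_ext (fun g => [:: (1, mprod (permrack g.1) g.2)]) s.
Proof. by rewrite linear_ext_map. Qed.

Lemma phi_eqB s t : eqB TensorRel s t -> eqB RackRel (phi s) (phi t).
Proof.
rewrite !phiE; apply: eqB_linear_ext => r Tr; rewrite linear_ext_map; apply: eqB_rel.
case: Tr => [[r0 [Q [Hr [HQ ->]]]] | [X [r0 [Hr ->]]]].
  case: Hr => [[X [Y [XY ->]]] | [X [Y [Z [XYZ ->]]]]].
  - apply: RelB_iso; [exact: rack_permrack_mprod.. |].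
    exact: miso_mprod (miso_permrack XY) (miso_refl Q).
  - apply: RelB_decomp; first exact: rack_permrack_mprod.
    exact: mdecomp_mprodl (rack_permrack X) (quandle_rack HQ) (mdecomp_permrack XYZ).
case: Hr => [[R1 [R2 [HR1 HR2 R12 ->]]] | [R [S [T [HR RST ->]]]]].
- apply: RelB_iso; [exact: rack_permrack_mprod.. |].
  exact: miso_mprod (miso_refl _) R12.
- apply: RelB_decomp; first exact: rack_permrack_mprod.
  exact: mdecomp_mprodr (quandle_rack HR) (rack_permrack X) RST.
Qed.

Lemma pidx2P a b c d (i : 'I_((a * b) * (c * d))) :
  exists x y z w, i = pidx (pidx (x, y), pidx (z, w)).
Proof.
exists (punidx (punidx i).1).1, (punidx (punidx i).1).2,
       (punidx (punidx i).2).1, (punidx (punidx i).2).2.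
by rewrite -!surjective_pairing !punidxK -surjective_pairing punidxK.
Qed.

Definition pidx_interchange a b c d (i : 'I_((a * b) * (c * d))) : 'I_((a * c) * (b * d)) :=
  pidx (pidx ((punidx (punidx i).1).1, (punidx (punidx i).2).1),
        pidx ((punidx (punidx i).1).2, (punidx (punidx i).2).2)).

Lemma pidx_interchangeE a b c d x y z w :
  @pidx_interchange a b c d (pidx (pidx (x, y), pidx (z, w))) = pidx (pidx (x, z), pidx (y, w)).
Proof. by rewrite /pidx_interchange !pidxK. Qed.

Lemma pidx_interchangeK a b c d (i : 'I_((a * b) * (c * d))) :
  pidx_interchange (pidx_interchange i) = i.
Proof. by have [x [y [z [w ->]]]] := pidx2P i; rewrite !pidx_interchangeE. Qed.

Lemma miso_mprod_interchange X X' Q Q' :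
  miso (mprod (permrack (pprod X X')) (mprod Q Q'))
       (mprod (mprod (permrack X) Q) (mprod (permrack X') Q')).
Proof.
exists (@pidx_interchange _ _ _ _); split; first by exists (@pidx_interchange _ _ _ _) => i;
  rewrite pidx_interchangeK.
move=> i j; have [x [y [z [w ->]]]] := pidx2P i; have [x' [y' [z' [w' ->]]]] := pidx2P j.
by rewrite !mop_mprod_pidx !mop_permrack pprod_pidx !pidx_interchangeE !pidxK.
Qed.

Lemma phi_fmul s t : tensor_gens s -> tensor_gens t ->
  eqB RackRel (phi (fmul tprod s t)) (fmul mprod (phi s) (phi t)).
Proof.
move=> Qs Qt; rewrite /phi /fmul map_allpairs allpairs_mapl allpairs_mapr /=.
apply: eqB_allpairs => p q s_p t_q; have Qp := Qs p s_p; have Qq := Qt q t_q.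
apply/eqB_pair_rel/RelB_iso; last exact: miso_mprod_interchange.
- exact: rack_mprod (rack_permrack _) (rack_mprod (quandle_rack Qp) (quandle_rack Qq)).
- exact: rack_mprod (rack_permrack_mprod _ Qp) (rack_permrack_mprod _ Qq).
Qed.

Lemma phi_unit : eqB RackRel (phi [:: (1, (ppoint, mpoint))]) [:: (1, mpoint)].
Proof.
have ord1_eq (x y : 'I_1) : x = y by rewrite (ord1 x) (ord1 y).
have Rpoint : is_rack mpoint by apply/rackP; split=> a b c *; apply: ord1_eq.
apply/eqB_pair_rel/RelB_iso => //; first exact: rack_mprod (rack_permrack _) Rpoint.
exists (fun=> ord0); split=> [|a b]; last exact: ord1_eq.
by exists (fun=> ord0) => i; apply: ord1_eq.
Qed.

(** * Quandles of orbits of the canonical automorphism *)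

Definition magma_of (T : finType) (op : T -> T -> T) : magma :=
  existT _ #|T| [ffun i => [ffun j => enum_rank (op (enum_val i) (enum_val j))]].

Lemma mop_magma_of (T : finType) (op : T -> T -> T) i j :
  mop (magma_of op) i j = enum_rank (op (enum_val i) (enum_val j)).
Proof. by rewrite /mop /= !ffunE. Qed.

Lemma quandle_magma_of (T : finType) (op : T -> T -> T) :
  (forall a, injective (op a)) -> (forall a b c, op a (op b c) = op (op a b) (op a c)) ->
  (forall a, op a a = a) -> is_quandle (magma_of op).
Proof.
move=> op_inj op_distr op_id; split; last by move=> a; rewrite mop_magma_of op_id enum_valK.
apply/rackP; split=> a b c; rewrite !mop_magma_of; last by rewrite !enum_rankK op_distr.
by move=> /enum_rank_inj /op_inj /enum_val_inj.
Qed.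

Lemma miso_magma_of (T1 T2 : finType) (op1 : T1 -> T1 -> T1) (op2 : T2 -> T2 -> T2)
    (h : T1 -> T2) : bijective h -> (forall a b, h (op1 a b) = op2 (h a) (h b)) ->
  miso (magma_of op1) (magma_of op2).
Proof.
move=> [g hK gK] hh; exists (fun i => enum_rank (h (enum_val i))); split.
  by exists (fun i => enum_rank (g (enum_val i))) => i; rewrite enum_rankK ?hK ?gK enum_valK.
by move=> i j; rewrite !mop_magma_of !enum_rankK hh.
Qed.

Lemma miso_magma_of_l (T : finType) (op : T -> T -> T) (N : magma) (h : T -> 'I_(tag N)) :
  bijective h -> (forall a b, h (op a b) = mop N (h a) (h b)) -> miso (magma_of op) N.
Proof.
move=> [g hK gK] hh; exists (fun i => h (enum_val i)); split.
  by exists (fun i => enum_rank (g i)) => i; rewrite ?enum_rankK ?gK ?hK ?enum_valK.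
by move=> i j; rewrite !mop_magma_of enum_rankK hh.
Qed.

Lemma msplit_magma_of (T T1 T2 : finType) (op : T -> T -> T) (op1 : T1 -> T1 -> T1)
    (op2 : T2 -> T2 -> T2) (h1 : T1 -> T) (h2 : T2 -> T) :
  injective h1 -> injective h2 ->
  (forall a b, h1 (op1 a b) = op (h1 a) (h1 b)) ->
  (forall a b, h2 (op2 a b) = op (h2 a) (h2 b)) -> img_partition h1 h2 ->
  @msplit (magma_of op) (magma_of op1) (magma_of op2)
    (fun i => enum_rank (h1 (enum_val i))) (fun i => enum_rank (h2 (enum_val i))).
Proof.
move=> h1_inj h2_inj hh1 hh2 [cov dis]; split.
- by move=> a b /enum_rank_inj /h1_inj /enum_val_inj.
- by move=> a b /enum_rank_inj /h2_inj /enum_val_inj.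
- by move=> a b; rewrite !mop_magma_of !enum_rankK hh1.
- by move=> a b; rewrite !mop_magma_of !enum_rankK hh2.
split=> [x|a b /enum_rank_inj]; last exact: dis.
case: (cov (enum_val x)) => [[a E]|[b E]];
  [left; exists (enum_rank a) | right; exists (enum_rank b)];
  by rewrite enum_rankK -E enum_valK.
Qed.

(* [order] alone is the order of a group element, from fingroup. *)
Notation forder := fingraph.order.

Section MorphOrbits.
Variables (T U : finType) (f : T -> T) (g : U -> U) (h : T -> U).
Hypothesis h_morph : {morph h : x / f x >-> g x}.

Lemma morph_iter k x : h (iter k f x) = iter k g (h x).
Proof. by elim: k => //= k IH; rewrite h_morph IH. Qed.

Lemma morph_fconnect x y : fconnect f x y -> fconnect g (h x) (h y).
Proof. by move=> xy; rewrite -(iter_findex xy) morph_iter fconnect_iter. Qed.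

Hypothesis h_inj : injective h.

Lemma inj_morph_fconnect x y : fconnect g (h x) (h y) -> fconnect f x y.
Proof. by move/iter_findex; rewrite -morph_iter => /h_inj <-; exact: fconnect_iter. Qed.

Lemma inj_morph_order x : forder g (h x) = forder f x.
Proof.
rewrite /fingraph.order -(card_imset (mem (fconnect f x)) h_inj).
apply: eq_card => y; rewrite inE /=; apply/idP/imsetP => [xy|[z xz ->]]; last exact: morph_fconnect.
by exists (iter (findex g (h x) y) f x); rewrite ?inE ?fconnect_iter // morph_iter iter_findex.
Qed.

End MorphOrbits.

Lemma fconnect_order (T : finType) (f : T -> T) x y :
  injective f -> fconnect f x y -> forder f x = forder f y.
Proof. by move=> f_inj xy; apply: eq_card => z; apply: (same_connect (fconnect_sym f_inj) xy). Qed.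

Definition theta (R : magma) (a : 'I_(tag R)) := mop R a a.

Lemma mhom_theta N M (f : 'I_(tag N) -> 'I_(tag M)) :
  mhom f -> {morph f : x / theta x >-> theta x}.
Proof. by move=> fh x; rewrite /theta fh. Qed.

Section Theta.
Variables (R : magma) (HR : is_rack R).
Local Notation "a |> b" := (mop R a b) (at level 40).
Local Notation theta := (@theta R).

Lemma mop_thetal a b : theta a |> b = a |> b.
Proof.
case: HR => /(_ a) [a' aK Ka] _.
by rewrite -[b]Ka /theta -rack_distr.
Qed.

Lemma mop_thetar a b : a |> theta b = theta (a |> b).
Proof. by rewrite /theta rack_distr. Qed.

Lemma theta_inj : injective theta.
Proof.
move=> a b Eab; have El c : a |> c = b |> c by rewrite -mop_thetal Eab mop_thetal.
by apply: (rack_inj HR (a := a)); rewrite -[a |> a]/(theta a) Eab /theta El.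
Qed.

Lemma theta_connect_sym : connect_sym (frel theta).
Proof. exact: fconnect_sym theta_inj. Qed.

Lemma froot_theta_eq a b : fconnect theta a b -> froot theta a = froot theta b.
Proof. by move/(fingraph.rootP theta_connect_sym). Qed.

Lemma connect_theta_root a : fconnect theta (froot theta a) a.
Proof. by rewrite theta_connect_sym connect_root. Qed.

Lemma mop_fconnect c c' d d' : fconnect theta c c' -> fconnect theta d d' ->
  fconnect theta (c |> d) (c' |> d').
Proof.
move=> /iter_findex <- /iter_findex <-.
have iter_l k x y : iter k theta x |> y = x |> y by elim: k => //= k <-; rewrite mop_thetal.
by rewrite iter_l (morph_iter (h := mop R c) (mop_thetar c)) fconnect_iter.
Qed.

Lemma forder_mop a b : forder theta (a |> b) = forder theta b.
Proof. exact: (inj_morph_order (mop_thetar a) (fun x y => @rack_inj R HR a x y)). Qed.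

End Theta.

(* The quandle lambda_n(R): a theta-orbit is represented by its [froot]. *)
Definition orbit_rep (R : magma) (n : nat) (a : 'I_(tag R)) : bool :=
  (forder (@theta R) a == n) && (froot (@theta R) a == a).
Arguments orbit_rep : clear implicits.

Definition orbit_reps (R : magma) (n : nat) := {a : 'I_(tag R) | orbit_rep R n a}.

Definition orbit_op (R : magma) (n : nat) (a b : orbit_reps R n) : orbit_reps R n :=
  insubd a (froot (@theta R) (mop R (val a) (val b))).

Definition orbit_quandle (R : magma) (n : nat) : magma := magma_of (@orbit_op R n).

Section OrbitQuandle.
Variables (R : magma) (n : nat) (HR : is_rack R).
Local Notation "a |> b" := (mop R a b) (at level 40).
Local Notation theta := (@theta R).
Local Notation theta_rootP := (fingraph.rootP (theta_connect_sym HR)).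
Implicit Types a b c : orbit_reps R n.

Lemma orbit_rep_root x : orbit_rep R n (froot theta x) = (forder theta x == n).
Proof.
by rewrite /orbit_rep (root_root (theta_connect_sym HR)) eqxx andbT
  -(fconnect_order (theta_inj HR) (connect_root _ x)).
Qed.

Lemma froot_val a : froot theta (val a) = val a.
Proof. by case: a => x /= /andP [_ /eqP]. Qed.

Lemma forder_val a : forder theta (val a) = n.
Proof. by case: a => x /= /andP [/eqP]. Qed.

Lemma orbit_opE a b : val (orbit_op a b) = froot theta (val a |> val b).
Proof. by rewrite /orbit_op val_insubd orbit_rep_root forder_mop // forder_val eqxx. Qed.

Lemma orbit_reps_fconnect a b : fconnect theta (val a) (val b) -> a = b.
Proof. by move/theta_rootP; rewrite !froot_val => /val_inj. Qed.

Lemma orbit_op_inj a : injective (orbit_op a).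
Proof.
move=> b c /(congr1 val); rewrite !orbit_opE => /theta_rootP /iter_findex.
rewrite -(morph_iter (h := mop R (val a)) (mop_thetar HR (val a))) => /(rack_inj HR) E.
by apply: orbit_reps_fconnect; rewrite -E fconnect_iter.
Qed.

Lemma orbit_op_distr a b c :
  orbit_op a (orbit_op b c) = orbit_op (orbit_op a b) (orbit_op a c).
Proof.
apply: val_inj; rewrite !orbit_opE; apply/theta_rootP.
apply: (connect_trans (y := val a |> (val b |> val c))).
  exact: (mop_fconnect HR (connect0 _ (val a)) (connect_theta_root HR (val b |> val c))).
rewrite rack_distr //.
exact: (mop_fconnect HR (connect_root _ (val a |> val b)) (connect_root _ (val a |> val c))).
Qed.

Lemma orbit_op_id a : orbit_op a a = a.
Proof.
apply: val_inj; rewrite orbit_opE -[val a |> val a]/(theta (val a)).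
by rewrite -(froot_theta_eq HR (fconnect1 _ _)) froot_val.
Qed.

Lemma quandle_orbit_quandle : is_quandle (orbit_quandle R n).
Proof. exact: quandle_magma_of orbit_op_inj orbit_op_distr orbit_op_id. Qed.

End OrbitQuandle.

Section OrbitMap.
Variables (N M : magma) (n : nat) (f : 'I_(tag N) -> 'I_(tag M)).
Hypotheses (HN : is_rack N) (HM : is_rack M) (fh : mhom f) (f_inj : injective f).

Lemma orbit_map_rep (a : orbit_reps N n) : orbit_rep M n (froot (@theta M) (f (val a))).
Proof. by rewrite orbit_rep_root // (inj_morph_order (mhom_theta fh) f_inj) forder_val. Qed.

Definition orbit_map (a : orbit_reps N n) : orbit_reps M n :=
  exist (orbit_rep M n) _ (orbit_map_rep a).

Lemma orbit_map_op a b : orbit_map (orbit_op a b) = orbit_op (orbit_map a) (orbit_map b).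
Proof.
apply: val_inj; rewrite /= !orbit_opE //=; apply/(fingraph.rootP (theta_connect_sym HM)).
apply: (connect_trans (morph_fconnect (mhom_theta fh) (connect_theta_root HN _))).
by rewrite fh; exact: (mop_fconnect HM (connect_root _ (f (val a))) (connect_root _ (f (val b)))).
Qed.

Lemma orbit_map_inj : injective orbit_map.
Proof.
move=> a b /(congr1 val) /(fingraph.rootP (theta_connect_sym HM)).
by move/(inj_morph_fconnect (mhom_theta fh) f_inj); exact: orbit_reps_fconnect.
Qed.

Lemma orbit_map_preimage (x : orbit_reps M n) a :
  val x = f a -> exists b, x = orbit_map b.
Proof.
move=> xa; have rep_a : orbit_rep N n (froot (@theta N) a).
  by rewrite orbit_rep_root // -(inj_morph_order (mhom_theta fh) f_inj) -xa forder_val.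
exists (exist (orbit_rep N n) _ rep_a); apply: val_inj => /=.
rewrite (froot_theta_eq HM (morph_fconnect (mhom_theta fh) (connect_theta_root HN a))).
by rewrite -xa froot_val.
Qed.

End OrbitMap.

Lemma orbit_mapK (N M : magma) n (f : 'I_(tag N) -> 'I_(tag M)) g
    (HN : is_rack N) (HM : is_rack M) (fh : mhom f) (f_inj : injective f)
    (gh : mhom g) (g_inj : injective g) :
  cancel f g -> cancel (orbit_map (n := n) HM fh f_inj) (orbit_map HN gh g_inj).
Proof.
move=> fK a; apply: val_inj; rewrite /=.
rewrite -(froot_theta_eq HN (morph_fconnect (mhom_theta gh) (connect_root _ (f (val a))))).
by rewrite fK froot_val.
Qed.

Lemma miso_orbit_quandle R1 R2 n : is_rack R1 -> is_rack R2 -> miso R1 R2 ->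
  miso (orbit_quandle R1 n) (orbit_quandle R2 n).
Proof.
move=> HR1 HR2 [f [[g fK gK] fh]].
have f_inj := can_inj fK; have g_inj := can_inj gK.
have gh : mhom g by move=> a b; apply: f_inj; rewrite fh !gK.
apply: (miso_magma_of (h := orbit_map HR2 fh f_inj)); last exact: orbit_map_op.
by exists (orbit_map HR1 gh g_inj); apply: orbit_mapK.
Qed.

Lemma mdecomp_orbit_quandle R S T n : is_rack R -> mdecomp R S T ->
  mdecomp (orbit_quandle R n) (orbit_quandle S n) (orbit_quandle T n).
Proof.
move=> HR /(mdecompP _ _ HR) [f1 [f2 [f1_inj f2_inj h1 h2 [cov dis]]]].
have HS := mhom_inj_rack f1_inj h1 HR; have HT := mhom_inj_rack f2_inj h2 HR.
apply/mdecompP; first exact: quandle_rack (quandle_orbit_quandle n HR).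
do 2 eexists.
apply: (msplit_magma_of (h1 := orbit_map HR h1 f1_inj) (h2 := orbit_map HR h2 f2_inj)).
- exact: orbit_map_inj.
- exact: orbit_map_inj.
- exact: orbit_map_op.
- exact: orbit_map_op.
split=> [x|a b /(congr1 val) /(fingraph.rootP (theta_connect_sym HR)) /iter_findex].
  case: (cov (val x)) => [[a /(orbit_map_preimage HS HR h1 f1_inj)]
                        |[b /(orbit_map_preimage HT HR h2 f2_inj)]];
    by [left | right].
by rewrite -(morph_iter (mhom_theta h1)); exact: dis.
Qed.

Lemma orbit_quandle_eqB n s t : eqB RackRel s t ->
  eqB QuandleRel [seq (p.1, orbit_quandle p.2 n) | p <- s]
                 [seq (p.1, orbit_quandle p.2 n) | p <- t].
Proof.
rewrite -!(linear_ext_map (fun R => orbit_quandle R n)); apply: eqB_linear_ext => r Hr.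
rewrite linear_ext_map; apply: eqB_rel.
case: Hr => [[R1 [R2 [HR1 HR2 R12 ->]]] | [R [S [T [HR RST ->]]]]].
- by apply: RelB_iso; [exact: quandle_orbit_quandle.. | exact: miso_orbit_quandle].
- by apply: RelB_decomp; [exact: quandle_orbit_quandle | exact: mdecomp_orbit_quandle].
Qed.

(** * Cycles *)

Definition cyc (n : nat) : permset := existT _ n (perm (@ordS_inj n)).

Lemma iter_ordS n k (x : 'I_n) : val (iter k (@ordS n) x) = ((x + k) %% n)%N.
Proof.
elim: k => [|k IH] /=; first by rewrite addn0 modn_small.
by rewrite IH -addn1 modnDml addn1 addnS.
Qed.

Section CycleTimesQuandle.
Variables (n : nat) (Q : magma) (HQ : is_quandle Q).
Local Notation M := (mprod (permrack (cyc n)) Q).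
Local Notation thetaM := (@theta M).

Lemma iter_theta_cyc k x q : iter k thetaM (pidx (x, q)) = pidx (iter k (@ordS n) x, q).
Proof.
elim: k => //= k ->; have [_ Qid] := HQ.
by rewrite /theta mop_mprod_pidx mop_permrack Qid /= permE.
Qed.
Lemma fconnect_cyc a b : fconnect thetaM a b = ((punidx a).2 == (punidx b).2).
Proof.
rewrite -(punidxK a) -(punidxK b); case: (punidx a) (punidx b) => x q [y r].
rewrite !pidxK /=; apply/idP/eqP => [/iter_findex|<-].
  by rewrite iter_theta_cyc => /pidx_inj [].
have -> : y = iter (y + (n - x)) (@ordS n) x.
  apply: val_inj; rewrite iter_ordS.
  by rewrite addnCA subnKC ?modnDr ?modn_small // ltnW.
by rewrite -iter_theta_cyc fconnect_iter.
Qed.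

Lemma forder_cyc a : forder thetaM a = n.
Proof.
rewrite /fingraph.order.
transitivity #|[set pidx (y, (punidx a).2) | y in 'I_n]|; last first.
  by rewrite card_imset ?card_ord // => y y' /pidx_inj [].
apply: eq_card => z; rewrite inE /= fconnect_cyc eq_sym; apply/eqP/imsetP => [qz|[y _ ->]].
  by exists (punidx z).1 => //; rewrite -qz -surjective_pairing punidxK.
exact: (congr1 snd (pidxK _)).
Qed.

Lemma orbit_quandle_cyc_empty m : m != n -> tag (orbit_quandle M m) = 0%N.
Proof.
move=> mn; apply: eq_card0 => a.
by have := forder_val a; rewrite forder_cyc => nm; rewrite nm eqxx in mn.
Qed.

Lemma orbit_quandle_cyc (n_gt0 : (0 < n)%N) : miso (orbit_quandle M n) Q.
Proof.
have HM := rack_permrack_mprod (cyc n) HQ.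
have snd_root a : (punidx (froot thetaM a)).2 = (punidx a).2.
  by apply/esym/eqP; rewrite -fconnect_cyc connect_root.
pose h (a : orbit_reps M n) := (punidx (val a)).2.
have rep q : orbit_rep M n (froot thetaM (pidx (Ordinal n_gt0, q))).
  by rewrite orbit_rep_root // forder_cyc.
pose g q := exist (orbit_rep M n) _ (rep q).
have hg q : h (g q) = q by rewrite /h /= snd_root pidxK.
apply: (miso_magma_of_l (h := h)).
  by exists g => // a; apply: (orbit_reps_fconnect HM); rewrite fconnect_cyc; apply/eqP; exact: hg.
by move=> a b; rewrite /h orbit_opE // snd_root mop_mprod pidxK.
Qed.

End CycleTimesQuandle.

Lemma perm_invariant_set n (p : {perm 'I_n}) (A : {set 'I_n}) :
  (forall x, x \in A -> p x \in A) -> [set p x | x in A] = A.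
Proof.
move=> pA; apply/eqP; rewrite eqEcard card_imset ?leqnn ?andbT; last exact: perm_inj.
by apply/subsetP => _ /imsetP [x Ax ->]; apply: pA.
Qed.

Section InvariantSubset.
Variables (X : permset) (A : {set 'I_(tag X)}).
Hypothesis A_inv : forall x, x \in A -> tagged X x \in A.
Local Notation T := {x : 'I_(tag X) | x \in A}.

Definition restr_fun (x : T) : T := exist (fun y => y \in A) _ (A_inv (valP x)).

Lemma restr_fun_inj : injective restr_fun.
Proof. by move=> x y /(congr1 val) /= /perm_inj /val_inj. Qed.

Lemma restr_enum_inj :
  injective (fun i : 'I_#|{: T}| => enum_rank (perm restr_fun_inj (enum_val i))).
Proof. by move=> i j /enum_rank_inj /perm_inj /enum_val_inj. Qed.

Definition restr_permset : permset := existT _ #|{: T}| (perm restr_enum_inj).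

Lemma restr_permset_embeds : pembeds_onto restr_permset A.
Proof.
exists (fun i => val (enum_val i)); split; first by move=> i j /val_inj /enum_val_inj.
split; last by move=> a; rewrite /= permE enum_rankK permE.
apply/setP => x; apply/imsetP/idP => [[i _ ->]|Ax]; first exact: valP.
by exists (enum_rank (exist (fun y => y \in A) x Ax)); rewrite ?enum_rankK.
Qed.

Lemma card_restr_permset : tag restr_permset = #|A|.
Proof. by rewrite /= card_sig; apply: eq_card => x; rewrite inE. Qed.

End InvariantSubset.

Lemma eqB_empty_permset (X : permset) : tag X = 0%N -> eqB PermRel [:: (1, X)] [::].
Proof.
move=> X0; have none (x : 'I_(tag X)) : False by case: x => m; rewrite X0.
have sets_eq (A B : {set 'I_(tag X)}) : A = B by apply/setP => x; case: (none x).
apply: eqB_null_rel; right; exists X, X, X; split=> //.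
exists set0, set0; split; [exact: sets_eq.. | by apply/pred0P => x; case: (none x) |].
by split; [exact: sets_eq | split; exists id; do !split=> //; apply: sets_eq].
Qed.

Section CycleOfPoint.
Variables (X : permset) (x0 : 'I_(tag X)).
Local Notation pi := (tagged X).
Local Notation n := (forder pi x0).

Definition orbit_set : {set 'I_(tag X)} := [set y | fconnect pi x0 y].

Lemma iter_mod_order m : iter (m %% n)%N pi x0 = iter m pi x0.
Proof.
have iter_mul k : iter (k * n)%N pi x0 = x0.
  by elim: k => // k IH; rewrite mulSn iterD IH iter_order //; exact: perm_inj.
by rewrite {2}(divn_eq m n) addnC iterD iter_mul.
Qed.

Lemma cyc_embeds_orbit : pembeds_onto (cyc n) orbit_set.
Proof.
exists (fun k => iter k pi x0); split.
  move=> i j E; apply: ord_inj.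
  have i_lt : (i < n)%N := ltn_ord i; have j_lt : (j < n)%N := ltn_ord j.
  by rewrite -(findex_iter i_lt) -(findex_iter j_lt) E.
split; last by move=> k; rewrite /= permE /=; exact: (iter_mod_order k.+1).
apply/setP => y; rewrite inE; apply/imsetP/idP => [[k _ ->]|x0y]; first exact: fconnect_iter.
by exists (Ordinal (findex_max x0y)); rewrite ?iter_findex.
Qed.

Lemma orbit_set_inv x : x \in orbit_set -> pi x \in orbit_set.
Proof. by rewrite !inE => x0x; apply: connect_trans x0x (fconnect1 _ _). Qed.

Lemma orbit_setC_inv x : x \in ~: orbit_set -> pi x \in ~: orbit_set.
Proof. by rewrite !inE -same_fconnect1_r //; exact: perm_inj. Qed.

Lemma pdecomp_orbit : pdecomp X (cyc n) (restr_permset orbit_setC_inv).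
Proof.
exists orbit_set, (~: orbit_set); split.
- exact: perm_invariant_set orbit_set_inv.
- exact: perm_invariant_set orbit_setC_inv.
- by rewrite -setI_eq0 setICr.
by split; [exact: setUCr | split; [exact: cyc_embeds_orbit | exact: restr_permset_embeds]].
Qed.

Lemma card_orbit_complement : (tag (restr_permset orbit_setC_inv) < tag X)%N.
Proof.
rewrite card_restr_permset -[X in (_ < X)%N]card_ord -(cardsC orbit_set).
rewrite -[X in (X < _)%N]add0n ltn_add2r card_gt0; apply/set0Pn.
by exists x0; rewrite inE connect0.
Qed.

End CycleOfPoint.

Lemma permset_cycles (X : permset) : exists2 ns : seq nat,
  all (leq 1) ns & eqB PermRel [:: (1, X)] [seq (1, cyc n) | n <- ns].
Proof.
move: {2}(tag X) (leqnn (tag X)) => k; elim: k X => [|k IHk] X Xk.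
  by exists [::]; last by apply/eqB_empty_permset/eqP; rewrite -leqn0.
have [X0|X_gt0] := posnP (tag X); first by exists [::]; last exact: eqB_empty_permset.
pose x0 := Ordinal X_gt0.
have [|ns ns_gt0 Ens] := IHk (restr_permset (@orbit_setC_inv X x0)).
  by rewrite -ltnS (leq_trans (card_orbit_complement x0)).
exists (forder (tagged X) x0 :: ns); first by rewrite /= fingraph.order_gt0.
apply: eqB_trans (eqB_split_rel _) (@eqB_cat _ _ [:: _] [:: _] _ _ (eqB_refl _ _) Ens).
by right; exists X, (cyc (forder (tagged X) x0)), (restr_permset (@orbit_setC_inv X x0));
  split=> //; exact: pdecomp_orbit.
Qed.

(** * Injectivity *)

Lemma eqB_tensorl Q s t : is_quandle Q -> eqB PermRel s t ->
  eqB TensorRel [seq (p.1, (p.2, Q)) | p <- s] [seq (p.1, (p.2, Q)) | p <- t].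
Proof.
move=> HQ; rewrite -!(linear_ext_map (fun X => (X, Q))); apply: eqB_linear_ext => r Hr.
by rewrite linear_ext_map; apply: eqB_rel; left; exists r, Q.
Qed.

Lemma eqB_tensorr X s t : eqB QuandleRel s t ->
  eqB TensorRel [seq (p.1, (X, p.2)) | p <- s] [seq (p.1, (X, p.2)) | p <- t].
Proof.
rewrite -!(linear_ext_map (fun Q => (X, Q))); apply: eqB_linear_ext => r Hr.
by rewrite linear_ext_map; apply: eqB_rel; right; exists X, r.
Qed.

Definition cyclic_tensors (u : seq (int * (permset * magma))) :=
  forall e, e \in u -> [/\ (0 < tag e.2.1)%N, e.2.1 = cyc (tag e.2.1) & is_quandle e.2.2].

Lemma eqB_cyclic_tensors s : tensor_gens s -> exists2 s', cyclic_tensors s' & eqB TensorRel s s'.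
Proof.
elim: s => [|[c [X Q]] s IHs] Qs; first by exists [::]; last exact: eqB_refl.
have [|s' s'_cyc Es] := IHs; first by move=> p s_p; apply: Qs; rewrite inE s_p orbT.
have HQ : is_quandle Q := Qs _ (mem_head _ _).
have [ns ns_gt0 Ens] := permset_cycles X.
exists ([seq (c, (cyc n, Q)) | n <- ns] ++ s').
  move=> e; rewrite mem_cat => /orP [/mapP [n ns_n ->]|/s'_cyc //].
  by split=> //=; move/allP: ns_gt0 => /(_ n ns_n).
apply: (@eqB_cat _ _ [:: _]) Es; have := eqB_scale c (eqB_tensorl HQ Ens).
by rewrite /scale_comb /= -!map_comp /comp /= mulr1.
Qed.

(* For cyclic tensors, the B(Q)-component of [u] along the m-cycle. *)
Definition tensor_slice (m : nat) (u : seq (int * (permset * magma))) : seq (int * magma) :=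
  [seq (p.1, p.2.2) | p <- u & tag p.2.1 == m].

Lemma eqB_empty_quandle (E : magma) c : is_quandle E -> tag E = 0%N ->
  eqB QuandleRel [:: (c, E)] [::].
Proof.
move=> HE E0; have none (x : 'I_(tag E)) : False by case: x => m; rewrite E0.
have := eqB_scale c (eqB_null_rel (RelB_decomp HE _)); rewrite /= mulr1; apply.
apply/mdecompP; first exact: quandle_rack.
by exists id, id; split=> //; split=> [x|x]; case: (none x).
Qed.

Lemma orbit_quandle_phi m u : cyclic_tensors u ->
  eqB QuandleRel [seq (p.1, orbit_quandle p.2 m) | p <- phi u] (tensor_slice m u).
Proof.
elim: u => [|[c [X Q]] u IHu] u_cyc; first exact: eqB_refl.
have {IHu} := IHu (fun e u_e => u_cyc e (mem_behead (s := _ :: u) u_e)).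
have [X_gt0 /= -> HQ] := u_cyc _ (mem_head _ _).
rewrite /tensor_slice /=; case: eqP => [Xm|/eqP Xm] IHu.
  apply: (@eqB_cat _ _ [:: _] [:: _]) IHu; rewrite Xm.
  apply/eqB_pair_rel/RelB_iso => //; first exact: quandle_orbit_quandle (rack_permrack_mprod _ HQ).
  by apply: (orbit_quandle_cyc HQ); rewrite -Xm.
apply: (@eqB_cat _ _ [:: _] [::]) IHu.
apply: eqB_empty_quandle; first exact: quandle_orbit_quandle (rack_permrack_mprod _ HQ).
by apply: (orbit_quandle_cyc_empty HQ); rewrite eq_sym.
Qed.

Lemma tensor_slice_filterC m m' u :
  tensor_slice m' [seq p <- u | tag p.2.1 != m] = if m' == m then [::] else tensor_slice m' u.
Proof.
rewrite /tensor_slice -filter_predI; case: eqP => [->|m'm].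
  by rewrite (@eq_filter _ _ pred0) ?filter_pred0 // => p /=; case: (_ == m).
by congr map; apply: eq_filter => p /=; case: eqP => // ->; apply/eqP.
Qed.

Lemma cyclic_tensors_eqB0 u : cyclic_tensors u ->
  (forall m, eqB QuandleRel (tensor_slice m u) [::]) -> eqB TensorRel u [::].
Proof.
move: {2}(size u) (leqnn (size u)) => k; elim: k u => [|k IHk] [|e u'] // u_size u_cyc slices0;
  try exact: eqB_refl.
set u := e :: u'; set m := tag e.2.1; pose P (p : int * (permset * magma)) := tag p.2.1 == m.
apply: (eqB_coef (s := filter P u ++ filter (predC P) u) _ (fun=> erefl)
  (@eqB_cat _ _ _ [::] _ [::] _ _)).
- by move=> g; rewrite /coef (perm_big _ (introT permPl (perm_filterC P u))).
- have -> : filter P u = [seq (q.1, (cyc m, q.2)) | q <- tensor_slice m u].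
    rewrite /tensor_slice -map_comp -[LHS]map_id; apply/eq_in_map => -[c [X Q]].
    by rewrite mem_filter => /andP [/eqP /= Xm /u_cyc [_ /= + _]]; rewrite Xm => <-.
  exact: eqB_tensorr (slices0 m).
apply: IHk.
- by rewrite size_filter /= /P eqxx (leq_trans (count_size _ u')).
- by move=> q; rewrite mem_filter => /andP [_ /u_cyc].
- by move=> m'; rewrite tensor_slice_filterC; case: eqP => _; [exact: eqB_refl | exact: slices0].
Qed.

Lemma phi_injective s : tensor_gens s -> eqB RackRel (phi s) [::] -> eqB TensorRel s [::].
Proof.
move=> Qs phi_s0; have [s' s'_cyc Es] := eqB_cyclic_tensors Qs.
have phi_s'0 : eqB RackRel (phi s') [::] := eqB_trans (phi_eqB (eqB_sym Es)) phi_s0.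
apply: (eqB_trans Es (cyclic_tensors_eqB0 s'_cyc _)) => m.
apply: eqB_trans (eqB_sym (orbit_quandle_phi m s'_cyc)) _.
exact: (orbit_quandle_eqB m phi_s'0).
Qed.

Theorem corollary7p13 :
  (* well defined on B(Z) (x) B(Q) *)
  (forall s t, tensor_gens s -> tensor_gens t ->
     eqB TensorRel s t -> eqB RackRel (phi s) (phi t)) /\
  (* multiplicative *)
  (forall s t, tensor_gens s -> tensor_gens t ->
     eqB RackRel (phi (fmul tprod s t)) (fmul mprod (phi s) (phi t))) /\
  (* unital *)
  eqB RackRel (phi [:: (1, (ppoint, mpoint))]) [:: (1, mpoint)] /\
  (* injective *)
  (forall s, tensor_gens s ->
     eqB RackRel (phi s) [::] -> eqB TensorRel s [::]).
Proof.
split; first by move=> s t _ _; exact: phi_eqB.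
split; first exact: phi_fmul.
split; first exact: phi_unit.
exact: phi_injective.
Qed.
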